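(* Let $t\ge3$ be an integer, and let $Q$ be a $(2P_3,C_4,C_6,C_7,T_0,(t+1)\text{-pentagon})$-free $t$-frame with an associated $t$-frame partition $(A;B_1,\dots,B_t;C_1,\dots,C_t)$. Set $B:=B_1\cup\dots\cup B_t$ and $C:=C_1\cup\dots\cup C_t$. Let $A=\{a_1,\dots,a_r\}$ be ordered so that $d_Q(a_r)\le\dots\le d_Q(a_1)$, and for each $i\in\{1,\dots,t\}$ let $B_i=\{b^i_1,\dots,b^i_{r_i}\}$ be ordered so that $d_Q(b^i_{r_i})\le\dots\le d_Q(b^i_1)$ and $C_i=\{c^i_1,\dots,c^i_{s_i}\}$ be ordered so that $d_Q(c^i_{s_i})\le\dots\le d_Q(c^i_1)$. Then: (a) $A,B_1,\dots,B_t,C_1,\dots,C_t$ are cliques; (b) either $A$ is complete to $B$, or all of the following hold: $t=3$; there exists $i^*\in\{1,2,3\}$ such that $B\setminus B_{i^*}\subseteq N_Q(a_r)\cap B\subseteq\dots\subseteq N_Q(a_1)\cap B=B$ (in particular $A$ is complete to $B\setminus B_{i^*}$); and for all $i\in\{1,2,3\}$, $B_i$ is complete to $C_i$; (c) for all $i\in\{1,\dots,t\}$: $\{c^i_1\}\subseteq N_Q(b^i_{r_i})\cap C_i\subseteq\dots\subseteq N_Q(b^i_1)\cap C_i=C_i$, and $\{b^i_1\}\subseteq N_Q(c^i_{s_i})\cap B_i\subseteq\dots\subseteq N_Q(c^i_1)\cap B_i=B_i$; (d) if $A$ is complete to $B$, then $Q$ is a $t$-villa with $t$-villa partition $(A;B_1,\dots,B_t;C_1,\dots,C_t)$;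 (e) if $A$ is not complete to $B$, then $t=3$ and $Q$ is a 5-basket with 5-basket partition $(A;B_1,B_2,B_3;C_1,C_2,C_3;\emptyset)$.
   Context: Graphs are finite, simple, nonnull; $d_Q(v)$ is the degree and $N_Q(v)$ the neighbourhood of $v$ in $Q$. A graph is $(H_1,\dots,H_m)$-free if it has no induced subgraph isomorphic to any $H_i$. $P_k$, $C_k$ are the path and cycle on $k$ vertices; $2P_3$ is two disjoint copies of $P_3$. $T_0$ is the graph with vertices $p,q,u_0,u_1,u_2,u_3,w_1,w_2,w_3$ and edges $pq,pu_0,pu_2,pu_3,qu_1,qu_2,qu_3,u_0w_1,u_1w_1,u_2w_2,u_3w_3,w_1w_2,w_1w_3,w_2w_3$. For $s\ge3$ the $s$-pentagon is the graph on vertices $a,b_1,\dots,b_s,c_1,\dots,c_s$ where $a$ is adjacent to every $b_i$ and no $c_i$, $\{b_i\}$ is stable, $\{c_i\}$ is a clique, and $b_ic_j$ is an edge iff $i=j$. For disjoint vertex sets $X,Y$, $X$ is complete (anticomplete) to $Y$ if every vertex of $X$ is adjacent (nonadjacent) to every vertex of $Y$. $t$-frame ($t\ge3$): a graph $Q$ whose vertex set partitions into nonempty sets $A,B_1,\dots,B_t,C_1,\dots,C_t$ (no condition on adjacency inside a set) such that every vertex of $A$ has a neighbour in at least two of $B_1,\dots,B_t$; $A$ is anticomplete to $C_1\cup\dots\cup C_t$; the $B_i$ are pairwise anticomplete; the $C_i$ are pairwise complete; $B_i$ is anticomplete to $C_j$ for $i\ne j$; and for each $i$, every vertex of $B_i$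 has a neighbour in $A$ and a neighbour in $C_i$, and every vertex of $C_i$ has a neighbour in $B_i$. This is a $t$-frame partition $(A;B_1,\dots,B_t;C_1,\dots,C_t)$. $t$-villa with $t$-villa partition $(A;B_1,\dots,B_t;C_1,\dots,C_t)$: $A,B_i,C_i$ are nonempty cliques partitioning the vertex set, $A$ is complete to $B_1\cup\dots\cup B_t$ and anticomplete to $C_1\cup\dots\cup C_t$; the $B_i$ pairwise anticomplete; the $C_i$ pairwise complete; $B_i$ anticomplete to $C_j$ for $i\ne j$; each $B_i$ can be ordered $\beta_1,\dots,\beta_{r}$ with $\emptyset\ne N(\beta_r)\cap C_i\subseteq\dots\subseteq N(\beta_1)\cap C_i=C_i$. 5-basket with 5-basket partition $(A;B_1,B_2,B_3;C_1,C_2,C_3;F)$: the sets partition the vertex set; $A,B_i,C_i$ are nonempty cliques, $F$ a possibly empty clique; $B_1,B_2,B_3$ pairwise anticomplete; $C_1,C_2,C_3$ pairwise complete; there is $i^*$ such that $A$ is complete to $(B_1\cup B_2\cup B_3)\setminus B_{i^*}$ and $A$ can be ordered $\alpha_1,\dots,\alpha_m$ with $N(\alpha_m)\cap B_{i^*}\subseteq\dots\subseteq N(\alpha_1)\cap B_{i^*}=B_{i^*}$; $A$ anticomplete to $C_1\cup C_2\cup C_3$; each $B_i$ complete to $C_i$ and anticomplete to $C_j$ ($j\ne i$); and there is $j^*$ such that $F$ is complete to $V\setminus(B_{j^*}\cup C_{j^*}\cup F)$ and anticomplete to $B_{j^*}\cup C_{j^*}$. *)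

From mathcomp Require Import all_boot.
Set Implicit Arguments. Unset Strict Implicit. Unset Printing Implicit Defensive.

Section Graphs.
Variable T : finType.
Variable e : rel T.

Definition simple_graph := symmetric e /\ irreflexive e.

Definition nbhd (v : T) : {set T} := [set u | e v u].
Definition deg (v : T) : nat := #|nbhd v|.

Definition clique (S : {set T}) :=
  forall x y, x \in S -> y \in S -> x != y -> e x y.
Definition complete (X Y : {set T}) := forall x y, x \in X -> y \in Y -> e x y.
Definition anticomplete (X Y : {set T}) := forall x y, x \in X -> y \in Y -> ~~ e x y.

Definition induced_sub (U : finType) (h : rel U) :=
  exists f : U -> T, injective f /\ forall x y, h x y = e (f x) (f y).
Definition H_free (U : finType) (h : rel U) := ~ induced_sub h.

Definition partitions (parts : seq {set T}) :=
  forall x, count (fun S : {set T} => x \in S) parts = 1.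

Definition enumerates (s : seq T) (S : {set T}) :=
  uniq s /\ forall x, (x \in s) = (x \in S).

Definition deg_nonincr (s : seq T) :=
  forall x0 j k, j <= k -> k < size s -> deg (nth x0 s k) <= deg (nth x0 s j).

Definition nested_nbhd (s : seq T) (X : {set T}) :=
  forall x0 j k, j <= k -> k < size s ->
    nbhd (nth x0 s k) :&: X \subset nbhd (nth x0 s j) :&: X.

Definition first_full (s : seq T) (X : {set T}) :=
  forall x0, 0 < size s -> nbhd (nth x0 s 0) :&: X = X.

Definition last_elt (x0 : T) (s : seq T) := nth x0 s (size s).-1.

Variable t : nat.

Definition Bunion (B : 'I_t -> {set T}) : {set T} := \bigcup_(i < t) B i.

Definition parts_of (A : {set T}) (B C : 'I_t -> {set T}) : seq {set T} :=
  A :: [seq B i | i <- enum 'I_t] ++ [seq C i | i <- enum 'I_t].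

Definition frame_partition (A : {set T}) (B C : 'I_t -> {set T}) :=
  3 <= t /\ partitions (parts_of A B C) /\
  A != set0 /\ (forall i, B i != set0) /\ (forall i, C i != set0) /\
  (forall a, a \in A -> exists i j, [/\ i != j,
          [exists b in B i, e a b] & [exists b in B j, e a b]]) /\
  (forall i, anticomplete A (C i)) /\
  (forall i j, i != j -> anticomplete (B i) (B j)) /\
  (forall i j, i != j -> complete (C i) (C j)) /\
  (forall i j, i != j -> anticomplete (B i) (C j)) /\
  (forall i, (forall b, b \in B i ->
                [exists a in A, e b a] /\ [exists c in C i, e b c])
          /\ (forall c, c \in C i -> [exists b in B i, e c b])).

Definition villa_partition (A : {set T}) (B C : 'I_t -> {set T}) :=
  3 <= t /\ partitions (parts_of A B C) /\
  A != set0 /\ (forall i, B i != set0) /\ (forall i, C i != set0) /\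
  clique A /\ (forall i, clique (B i)) /\ (forall i, clique (C i)) /\
  complete A (Bunion B) /\ (forall i, anticomplete A (C i)) /\
  (forall i j, i != j -> anticomplete (B i) (B j)) /\
  (forall i j, i != j -> complete (C i) (C j)) /\
  (forall i j, i != j -> anticomplete (B i) (C j)) /\
  (forall i, exists s, [/\ enumerates s (B i), nested_nbhd s (C i),
            first_full s (C i) &
            forall x0, 0 < size s -> nbhd (last_elt x0 s) :&: C i != set0]).

Definition basket_partition (A : {set T}) (B C : 'I_t -> {set T}) (F : {set T}) :=
  t = 3 /\ partitions (rcons (parts_of A B C) F) /\
  A != set0 /\ (forall i, B i != set0) /\ (forall i, C i != set0) /\
  clique A /\ (forall i, clique (B i)) /\ (forall i, clique (C i)) /\ clique F /\
  (forall i j, i != j -> anticomplete (B i) (B j)) /\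
  (forall i j, i != j -> complete (C i) (C j)) /\
  (exists istar, complete A (Bunion B :\: B istar) /\
     exists s, [/\ enumerates s A, nested_nbhd s (B istar) &
                   first_full s (B istar)]) /\
  (forall i, anticomplete A (C i)) /\
  (forall i, complete (B i) (C i)) /\
  (forall i j, i != j -> anticomplete (B i) (C j)) /\
  (exists jstar, complete F (~: (B jstar :|: C jstar :|: F))
              /\ anticomplete F (B jstar :|: C jstar)).

End Graphs.

Definition twoP3_edge (x y : 'I_6) : bool :=
  let a := nat_of_ord x in let b := nat_of_ord y in
  [|| (a == 0) && (b == 1), (a == 1) && (b == 2),
      (a == 3) && (b == 4) | (a == 4) && (b == 5)].
Definition twoP3 : rel 'I_6 := fun x y => twoP3_edge x y || twoP3_edge y x.

(* cycle C_k on 'I_k (used for k >= 3) *)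
Definition cycle_rel (k : nat) : rel 'I_k :=
  fun x y => (nat_of_ord y == x.+1 %% k) || (nat_of_ord x == y.+1 %% k).

(* T_0 on 'I_9: p=0, q=1, u0=2, u1=3, u2=4, u3=5, w1=6, w2=7, w3=8 *)
Definition T0_edges : seq (nat * nat) :=
  [:: (0,1); (0,2); (0,4); (0,5); (1,3); (1,4); (1,5); (2,6); (3,6);
      (4,7); (5,8); (6,7); (6,8); (7,8)].
Definition T0_rel : rel 'I_9 :=
  fun x y => ((nat_of_ord x, nat_of_ord y) \in T0_edges)
          || ((nat_of_ord y, nat_of_ord x) \in T0_edges).

(* s-pentagon on option ('I_s + 'I_s): None = a, inl i = b_i, inr i = c_i *)
Definition pent_edge (s : nat) (x y : option ('I_s + 'I_s)) : bool :=
  match x, y with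
  | None, Some (inl _) => true
  | Some (inr i), Some (inr j) => i != j
  | Some (inl i), Some (inr j) => i == j
  | _, _ => false
  end.
Definition pentagon_rel (s : nat) : rel (option ('I_s + 'I_s)) :=
  fun x y => pent_edge x y || pent_edge y x.

From mathcomp Require Import all_boot zify.
Set Implicit Arguments. Unset Strict Implicit. Unset Printing Implicit Defensive.

(* Every claim is proved by contradiction: its failure, together with the
   adjacencies forced by the frame axioms, produces a few vertices inducing one
   of the forbidden graphs 2P3, C4, C6, C7, T0 or the (t+1)-pentagon.  In this
   way first every C_i, then every B_i, then A is a clique; next, a vertex of A
   missing a vertex of B_k sees all of B outside B_k, and a single such non-edge
   forces t = 3, a unique exceptional part B_{i*}, and every B_i complete to C_i.
   For the orderings: two vertices of A (towards B), of B_i (towards C_i) or of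
   C_i (towards B_i) never have crossing private neighbours (that would induce a
   C4, or a C6 through two parts), so their neighbourhoods are comparable, and
   all vertices of such a layer have equally many neighbours outside the target
   set.  Sorting by degree therefore sorts these neighbourhoods by inclusion. *)

Lemma count_enumE (I : finType) (P : pred I) : count P (enum I) = #|P|.
Proof. by rewrite cardE -size_filter enumT /enum_mem; congr size; apply: eq_filter. Qed.

Lemma exists_notin (I : finType) (s : seq I) : size s < #|I| -> exists k, k \notin s.
Proof.
move=> small; case: (pickP [pred k | k \notin s]) => [k sk | all_in]; first by exists k.
have : #|I| <= size s.
  rewrite cardT; apply: uniq_leq_size (enum_uniq _) _ => x _.
  by have := all_in x; rewrite /= => /negbFE.
by rewrite leqNgt small.
Qed.

Section Graph.
Variables (T : finType) (e : rel T).
Hypotheses (e_sym : symmetric e) (e_irr : irreflexive e).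

Lemma adj_sym x y : e x y -> e y x.
Proof. by rewrite e_sym. Qed.

Lemma adj_neq x y : e x y -> x != y.
Proof. by apply: contraTneq => ->; rewrite e_irr. Qed.

Lemma neq_of_nbr x y z : e x z -> ~~ e y z -> x != y.
Proof. by move=> xz; apply: contraNneq => <-. Qed.

(** * Degree orderings and nested neighbourhoods *)

Lemma enumerates_size_gt0 (s : seq T) (S : {set T}) x :
  enumerates s S -> x \in S -> 0 < size s.
Proof. by case=> _ memS; rewrite -memS; case: s {memS}. Qed.

Lemma mem_enumerates_first (s : seq T) (S : {set T}) x0 :
  enumerates s S -> 0 < size s -> nth x0 s 0 \in S.
Proof. by case=> _ memS s_gt0; rewrite -memS mem_nth. Qed.

Lemma mem_enumerates_last (s : seq T) (S : {set T}) x0 :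
  enumerates s S -> 0 < size s -> last_elt x0 s \in S.
Proof. by case=> _ memS s_gt0; rewrite -memS mem_nth // ltn_predL. Qed.

Lemma nested_nbhd_of_comparable (s : seq T) (S X : {set T}) K :
  enumerates s S -> deg_nonincr e s ->
  {in S &, forall u v, nbhd e u :&: X \subset nbhd e v :&: X \/
                       nbhd e v :&: X \subset nbhd e u :&: X} ->
  {in S, forall u, #|nbhd e u :\: X| = K} -> nested_nbhd e s X.
Proof.
move=> [_ memS] deg_s comparable outside x0 j k jk ks.
have js : j < size s := leq_ltn_trans jk ks.
have := deg_s x0 j k jk ks; set u := nth x0 s k; set v := nth x0 s j => deg_uv.
have [Su Sv] : u \in S /\ v \in S by rewrite -!memS !mem_nth.
have [// | sub_vu] := comparable u v Su Sv.
(* The degrees of u and v differ only inside X. *)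
suff -> : nbhd e u :&: X = nbhd e v :&: X by [].
apply/eqP; rewrite eq_sym eqEcard sub_vu /=; move: deg_uv.
by rewrite /deg -(cardsID X (nbhd e u)) -(cardsID X (nbhd e v)) !outside // leq_add2r.
Qed.

Lemma nested_nbhd_of_complete (s : seq T) (S X : {set T}) :
  enumerates s S -> complete e S X -> nested_nbhd e s X.
Proof.
move=> [_ memS] SX x0 j k jk ks; have js : j < size s := leq_ltn_trans jk ks.
apply/subsetP => x; rewrite !inE => /andP[_ Xx]; rewrite Xx andbT.
by apply: SX Xx; rewrite -memS mem_nth.
Qed.

Lemma first_full_of_nested (s : seq T) (S X : {set T}) :
  enumerates s S -> nested_nbhd e s X ->
  (forall x, x \in X -> exists2 u, u \in S & e u x) -> first_full e s X.
Proof.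
move=> [_ memS] nested covered x0 s_gt0; apply/setIidPr/subsetP => x Xx.
have [u Su eux] := covered x Xx; have us : index u s < size s by rewrite index_mem memS.
have /subsetP/(_ x) := nested x0 0 (index u s) (leq0n _) us.
by rewrite nth_index -?index_mem // !inE eux Xx => /(_ isT)/andP[].
Qed.

Lemma nested_nbhd_subset (s : seq T) (X Y : {set T}) :
  Y \subset X -> nested_nbhd e s X -> nested_nbhd e s Y.
Proof.
move=> YX nested x0 j k jk ks; rewrite -(setIidPr YX) !setIA.
exact: setSI (nested x0 j k jk ks).
Qed.

Lemma first_full_subset (s : seq T) (X Y : {set T}) :
  Y \subset X -> first_full e s X -> first_full e s Y.
Proof. by move=> YX full x0 s_gt0; rewrite -(setIidPr YX) setIA full. Qed.

Lemma card_setD1 (S : {set T}) u : u \in S -> #|S :\ u| = #|S| - 1.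
Proof. by move=> Su; rewrite [#|S|](cardsD1 u) Su add1n subn1. Qed.

Lemma first_full_nbr (s : seq T) (X : {set T}) x0 x :
  first_full e s X -> 0 < size s -> x \in X -> e (nth x0 s 0) x.
Proof. by move=> full s_gt0 Xx; move/setP/(_ x): (full x0 s_gt0); rewrite !inE Xx andbT => ->. Qed.

Lemma nbhd_comparable (X : {set T}) u v :
  (forall p q, p \in X -> q \in X -> e u p -> ~~ e v p -> e v q -> ~~ e u q -> False) ->
  nbhd e u :&: X \subset nbhd e v :&: X \/ nbhd e v :&: X \subset nbhd e u :&: X.
Proof.
move=> no_cross.
have [|/subsetPn[p]] := boolP (nbhd e u :&: X \subset nbhd e v :&: X); first by left.
rewrite !inE => /andP[up Xp]; rewrite Xp andbT => vp; right.
apply/subsetP => q; rewrite !inE => /andP[vq Xq]; rewrite Xq andbT.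
by apply: contraT => uq; case: (no_cross p q Xp Xq up vp vq uq).
Qed.

Lemma completeP (X Y : {set T}) :
  reflect (complete e X Y) [forall x in X, forall y in Y, e x y].
Proof.
apply: (iffP forall_inP) => [XY x y Xx Yy | XY x Xx]; last by apply/forall_inP => y; apply: XY.
exact: (forall_inP (XY x Xx)).
Qed.

Lemma not_complete_nonadj (X Y : {set T}) :
  ~ complete e X Y -> exists x y, [/\ x \in X, y \in Y & ~~ e x y].
Proof.
move/completeP; rewrite negb_forall_in => /existsP[x /andP[Xx]].
by rewrite negb_forall_in => /existsP[y /andP[Yy xy]]; exists x, y.
Qed.

(** * Forbidden induced subgraphs *)

Lemma induced_sub_seq n (h : rel 'I_n) (x0 : T) (vs : seq T) :
  size vs = n -> uniq vs ->
  (forall i j : 'I_n, h i j = e (nth x0 vs i) (nth x0 vs j)) -> induced_sub e h.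
Proof.
move=> size_vs uniq_vs hE; exists (fun i : 'I_n => nth x0 vs i); split=> // i j /eqP.
by rewrite nth_uniq ?size_vs // => /eqP/val_inj.
Qed.

Ltac contradict_adjacency :=
  match goal with
  | H : is_true (?x != ?x) |- _ => by rewrite eqxx in H
  | H : is_true (e ?x ?x) |- _ => by rewrite e_irr in H
  | H : is_true (e ?x ?y), H' : is_true (~~ e ?x ?y) |- _ => by rewrite H in H'
  | H : is_true (e ?x ?y), H' : is_true (~~ e ?y ?x) |- _ => by rewrite e_sym H in H'
  end.

Ltac eval_adjacency :=
  match goal with
  | |- context [e ?x ?x] => rewrite e_irr
  | H : is_true (e ?x ?y) |- context [e ?x ?y] => rewrite H
  | H : is_true (e ?y ?x) |- context [e ?x ?y] => rewrite e_sym H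
  | H : is_true (~~ e ?x ?y) |- context [e ?x ?y] => rewrite (negbTE H)
  | H : is_true (~~ e ?y ?x) |- context [e ?x ?y] => rewrite e_sym (negbTE H)
  end.

(* The hypotheses in context must give the adjacency or non-adjacency of every
   pair of listed vertices; two of them are then distinct because some third
   vertex is adjacent to exactly one of them, or by an explicit hypothesis. *)
Ltac induced_by_hyps x0 vs :=
  apply: (@induced_sub_seq _ _ x0 vs) => //;
  [ rewrite /= !inE !negb_or; repeat (apply/andP; split); try done;
    apply/eqP => same; subst; contradict_adjacency
  | case=> [[|[|[|[|[|[|[|[|[|?]]]]]]]]] ?] //; case=> [[|[|[|[|[|[|[|[|[|?]]]]]]]]] ?] //=;
    by eval_adjacency ].

Hypothesis free_C4 : H_free e (@cycle_rel 4).

Lemma no_induced_C4 v0 v1 v2 v3 :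
  e v0 v1 -> ~~ e v0 v2 -> e v0 v3 -> e v1 v2 -> ~~ e v1 v3 -> e v2 v3 ->
  v0 != v2 -> v1 != v3 -> False.
Proof. by move=> *; apply: free_C4; induced_by_hyps v0 [:: v0; v1; v2; v3]. Qed.
Arguments no_induced_C4 : clear implicits.

Hypothesis free_C6 : H_free e (@cycle_rel 6).

Lemma no_induced_C6 v0 v1 v2 v3 v4 v5 :
  e v0 v1 -> ~~ e v0 v2 -> ~~ e v0 v3 -> ~~ e v0 v4 -> e v0 v5 ->
  e v1 v2 -> ~~ e v1 v3 -> ~~ e v1 v4 -> ~~ e v1 v5 ->
  e v2 v3 -> ~~ e v2 v4 -> ~~ e v2 v5 ->
  e v3 v4 -> ~~ e v3 v5 ->
  e v4 v5 -> False.
Proof. by move=> *; apply: free_C6; induced_by_hyps v0 [:: v0; v1; v2; v3; v4; v5]. Qed.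
Arguments no_induced_C6 : clear implicits.

Hypothesis free_C7 : H_free e (@cycle_rel 7).

Lemma no_induced_C7 v0 v1 v2 v3 v4 v5 v6 :
  e v0 v1 -> ~~ e v0 v2 -> ~~ e v0 v3 -> ~~ e v0 v4 -> ~~ e v0 v5 -> e v0 v6 ->
  e v1 v2 -> ~~ e v1 v3 -> ~~ e v1 v4 -> ~~ e v1 v5 -> ~~ e v1 v6 ->
  e v2 v3 -> ~~ e v2 v4 -> ~~ e v2 v5 -> ~~ e v2 v6 ->
  e v3 v4 -> ~~ e v3 v5 -> ~~ e v3 v6 ->
  e v4 v5 -> ~~ e v4 v6 ->
  e v5 v6 -> False.
Proof.
by move=> *; apply: free_C7; induced_by_hyps v0 [:: v0; v1; v2; v3; v4; v5; v6].
Qed.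
Arguments no_induced_C7 : clear implicits.

Hypothesis free_2P3 : H_free e twoP3.

Lemma no_induced_2P3 v0 v1 v2 v3 v4 v5 :
  e v0 v1 -> ~~ e v0 v2 -> ~~ e v0 v3 -> ~~ e v0 v4 -> ~~ e v0 v5 ->
  e v1 v2 -> ~~ e v1 v3 -> ~~ e v1 v4 -> ~~ e v1 v5 ->
  ~~ e v2 v3 -> ~~ e v2 v4 -> ~~ e v2 v5 ->
  e v3 v4 -> ~~ e v3 v5 ->
  e v4 v5 -> v0 != v2 -> v3 != v5 -> False.
Proof. by move=> *; apply: free_2P3; induced_by_hyps v0 [:: v0; v1; v2; v3; v4; v5]. Qed.
Arguments no_induced_2P3 : clear implicits.

Hypothesis free_T0 : H_free e T0_rel.

Lemma no_induced_T0 p q u0 u1 u2 u3 w1 w2 w3 :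
  e p q -> e p u0 -> ~~ e p u1 -> e p u2 -> e p u3 -> ~~ e p w1 -> ~~ e p w2 -> ~~ e p w3 ->
  ~~ e q u0 -> e q u1 -> e q u2 -> e q u3 -> ~~ e q w1 -> ~~ e q w2 -> ~~ e q w3 ->
  ~~ e u0 u1 -> ~~ e u0 u2 -> ~~ e u0 u3 -> e u0 w1 -> ~~ e u0 w2 -> ~~ e u0 w3 ->
  ~~ e u1 u2 -> ~~ e u1 u3 -> e u1 w1 -> ~~ e u1 w2 -> ~~ e u1 w3 ->
  ~~ e u2 u3 -> ~~ e u2 w1 -> e u2 w2 -> ~~ e u2 w3 ->
  ~~ e u3 w1 -> ~~ e u3 w2 -> e u3 w3 ->
  e w1 w2 -> e w1 w3 ->
  e w2 w3 -> False.
Proof.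
by move=> *; apply: free_T0; induced_by_hyps p [:: p; q; u0; u1; u2; u3; w1; w2; w3].
Qed.
Arguments no_induced_T0 : clear implicits.

Lemma induced_sub_twin_free (U : finType) (h : rel U) (f : U -> T) :
  (forall x y, x != y -> h x y \/ exists z, h x z != h y z) ->
  (forall x y, h x y = e (f x) (f y)) -> induced_sub e h.
Proof.
move=> twin_free hE; exists f; split=> // x y fxy; apply/eqP/negPn/negP => /twin_free[].
  by rewrite hE fxy e_irr.
by case=> z; rewrite !hE fxy eqxx.
Qed.

Lemma pentagon_twin_free s : 1 < s -> forall x y : option ('I_s + 'I_s),
  x != y -> pentagon_rel x y \/ exists z, pentagon_rel x z != pentagon_rel y z.
Proof.
move=> s_gt1.
have other (i : 'I_s) : exists j, j != i.
  have [j] : exists j, j \notin [:: i] by apply: exists_notin; rewrite card_ord.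
  by rewrite inE; exists j.
rewrite /pentagon_rel; case=> [[i|i]|] [[j|j]|] //= ij; try by [left | right; exists None].
- have ji : j != i by apply: contra_neq ij => ->.
  by right; exists (Some (inr i)); rewrite /= eqxx (negPf ji).
- have ij' : i != j by apply: contra_neq ij => ->.
  by left; rewrite ij'.
- by have [k ki] := other i; right; exists (Some (inl k)); rewrite /= (negPf ki).
- by have [k kj] := other j; right; exists (Some (inl k)); rewrite /= (negPf kj).
Qed.

Lemma no_induced_pentagon s (a : T) (b c : 'I_s -> T) :
  H_free e (@pentagon_rel s) -> 1 < s ->
  (forall i, e a (b i)) -> (forall i, ~~ e a (c i)) ->
  (forall i j, i != j -> ~~ e (b i) (b j)) -> (forall i j, i != j -> e (c i) (c j)) ->
  (forall i j, e (b i) (c j) = (i == j)) -> False.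
Proof.
move=> free_pent s_gt1 ab ac bb cc bc; apply: free_pent.
apply: (induced_sub_twin_free (pentagon_twin_free s_gt1)
  (f := fun x => match x with Some (inl i) => b i | Some (inr i) => c i | None => a end)).
case=> [[i|i]|] [[j|j]|];
  rewrite /pentagon_rel /= ?e_irr ?bc ?(e_sym _ a) ?ab ?(negPf (ac _)) ?orbF //.
- by have [->|ij] := eqVneq i j; rewrite ?e_irr ?(negPf (bb _ _ ij)).
- by rewrite e_sym bc.
- by have [->|ij] := eqVneq i j; rewrite ?e_irr // cc // ij eq_sym ij.
Qed.

Section Frame.
Variables (t : nat) (A : {set T}) (B C : 'I_t -> {set T}).
Hypotheses (t_ge3 : 3 <= t) (free_pentagon : H_free e (@pentagon_rel t.+1)).
Hypothesis parts : partitions (parts_of A B C).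
Hypotheses (A_neq0 : A != set0) (B_neq0 : forall i, B i != set0) (C_neq0 : forall i, C i != set0).
Hypothesis A_two_parts : forall a, a \in A -> exists i j,
  [/\ i != j, [exists b in B i, e a b] & [exists b in B j, e a b]].
Hypothesis A_C_anti : forall i, anticomplete e A (C i).
Hypothesis B_B_anti : forall i j, i != j -> anticomplete e (B i) (B j).
Hypothesis C_C_complete : forall i j, i != j -> complete e (C i) (C j).
Hypothesis B_C_anti : forall i j, i != j -> anticomplete e (B i) (C j).
Hypothesis B_C_nbrs : forall i,
  (forall b, b \in B i -> [exists a in A, e b a] /\ [exists c in C i, e b c]) /\
  (forall c, c \in C i -> [exists b in B i, e c b]).

Lemma other_index (i : 'I_t) : exists j, j != i.
Proof.
have [k] : exists k, k \notin [:: i] by apply: exists_notin; rewrite card_ord ltnW.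
by rewrite inE; exists k.
Qed.

Lemma third_index (i j : 'I_t) : exists2 k, k != i & k != j.
Proof.
have [k] : exists k, k \notin [:: i; j] by apply: exists_notin; rewrite card_ord.
by rewrite !inE negb_or => /andP[]; exists k.
Qed.

Lemma fourth_index (i j k : 'I_t) : 3 < t -> exists m, [/\ m != i, m != j & m != k].
Proof.
move=> t_gt3; have [m] : exists m, m \notin [:: i; j; k].
  by apply: exists_notin; rewrite card_ord.
by rewrite !inE !negb_or => /and3P[]; exists m.
Qed.

Lemma four_indices_gt3 (p q j k : 'I_t) :
  p != q -> p != j -> p != k -> q != j -> q != k -> j != k -> 3 < t.
Proof.
move=> pq pj pk qj qk jk; rewrite -[t]card_ord -(card_uniqP _ : #|[:: p; q; j; k]| = 4).
  exact: max_card.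
by rewrite /= !inE !negb_or pq pj pk qj qk jk.
Qed.

Lemma frame_parts_count x :
  (x \in A) + #|[pred i | x \in B i]| + #|[pred i | x \in C i]| = 1.
Proof.
have := parts x; rewrite /parts_of -cat1s !count_cat (count_map B) (count_map C) !count_enumE.
by rewrite /= addn0 addnA.
Qed.

Lemma frame_cover x : [\/ x \in A, exists i, x \in B i | exists i, x \in C i].
Proof.
have := frame_parts_count x.
have [Ax _ | nAx] := boolP (x \in A); first exact: Or31.
have [/card_gt0P[i Bx] _ | nBx] := boolP (0 < #|[pred i | x \in B i]|).
  by apply: Or32; exists i.
have [/card_gt0P[i Cx] _ | nCx] := boolP (0 < #|[pred i | x \in C i]|).
  by apply: Or33; exists i.
by move: nBx nCx; lia.
Qed.

Lemma A_B_disjoint x i : x \in A -> x \in B i -> False.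
Proof.
move=> Ax Bx; have := frame_parts_count x; rewrite Ax.
suff : 0 < #|[pred j | x \in B j]| by lia.
by apply/card_gt0P; exists i.
Qed.

Lemma A_C_disjoint x i : x \in A -> x \in C i -> False.
Proof.
move=> Ax Cx; have := frame_parts_count x; rewrite Ax.
suff : 0 < #|[pred j | x \in C j]| by lia.
by apply/card_gt0P; exists i.
Qed.

Lemma B_C_disjoint x i j : x \in B i -> x \in C j -> False.
Proof.
move=> Bx Cx; have := frame_parts_count x.
suff : 0 < #|[pred k | x \in B k]| /\ 0 < #|[pred k | x \in C k]| by lia.
by split; apply/card_gt0P; [exists i | exists j].
Qed.

Lemma B_index_unique x i j : x \in B i -> x \in B j -> i = j.
Proof.
move=> Bi Bj; apply/eqP/negPn/negP => ij; have := frame_parts_count x.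
suff : 1 < #|[pred k | x \in B k]| by lia.
by apply/card_gt1P; exists i, j.
Qed.

Lemma C_index_unique x i j : x \in C i -> x \in C j -> i = j.
Proof.
move=> Ci Cj; apply/eqP/negPn/negP => ij; have := frame_parts_count x.
suff : 1 < #|[pred k | x \in C k]| by lia.
by apply/card_gt1P; exists i, j.
Qed.

Lemma neq_A_B x y i : x \in A -> y \in B i -> x != y.
Proof. by move=> Ax By; apply: contraTneq By => <-; apply/negP; apply: A_B_disjoint. Qed.

Lemma neq_A_C x y i : x \in A -> y \in C i -> x != y.
Proof. by move=> Ax Cy; apply: contraTneq Cy => <-; apply/negP; apply: A_C_disjoint. Qed.

Lemma neq_B_C x y i j : x \in B i -> y \in C j -> x != y.
Proof. by move=> Bx Cy; apply: contraTneq Cy => <-; apply/negP; exact: B_C_disjoint Bx. Qed.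

Lemma neq_B_B x y i j : x \in B i -> y \in B j -> i != j -> x != y.
Proof. by move=> Bx By; apply: contraNneq => xy; apply/eqP/(B_index_unique Bx); rewrite xy. Qed.

Lemma neq_C_C x y i j : x \in C i -> y \in C j -> i != j -> x != y.
Proof. by move=> Cx Cy; apply: contraNneq => xy; apply/eqP/(C_index_unique Cx); rewrite xy. Qed.

Lemma A_C_nonadj x y i : x \in A -> y \in C i -> ~~ e x y.
Proof. exact: A_C_anti. Qed.

Lemma B_B_nonadj x y i j : x \in B i -> y \in B j -> i != j -> ~~ e x y.
Proof. by move=> Bx By ij; apply: B_B_anti ij _ _ Bx By. Qed.

Lemma B_C_nonadj x y i j : x \in B i -> y \in C j -> i != j -> ~~ e x y.
Proof. by move=> Bx Cy ij; apply: B_C_anti ij _ _ Bx Cy. Qed.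

Lemma C_C_adj x y i j : x \in C i -> y \in C j -> i != j -> e x y.
Proof. by move=> Cx Cy ij; apply: C_C_complete ij _ _ Cx Cy. Qed.

(* [frame_auto] closes the adjacency, non-adjacency and distinctness side
   conditions that follow from the frame axioms and the facts in context;
   [frame_clique] is extended each time a part is shown to be a clique. *)
Ltac frame_index_neq := solve [assumption | rewrite eq_sym; assumption].

Ltac frame_adj_basic :=
  match goal with
  | |- is_true (~~ e _ _) => first
     [ assumption | rewrite e_sym; assumption
     | eapply A_C_nonadj; eassumption
     | rewrite e_sym; eapply A_C_nonadj; eassumption
     | eapply B_B_nonadj; [eassumption | eassumption | frame_index_neq]
     | eapply B_C_nonadj; [eassumption | eassumption | frame_index_neq]
     | rewrite e_sym; eapply B_C_nonadj; [eassumption | eassumption | frame_index_neq] ]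
  | |- is_true (e _ _) => first
     [ assumption | rewrite e_sym; assumption
     | eapply C_C_adj; [eassumption | eassumption | frame_index_neq] ]
  end.

Ltac frame_neq :=
  match goal with
  | |- is_true (?x != ?y) => first
     [ frame_index_neq
     | eapply neq_A_B; eassumption | rewrite eq_sym; eapply neq_A_B; eassumption
     | eapply neq_A_C; eassumption | rewrite eq_sym; eapply neq_A_C; eassumption
     | eapply neq_B_C; eassumption | rewrite eq_sym; eapply neq_B_C; eassumption
     | eapply neq_B_B; [eassumption | eassumption | frame_index_neq]
     | eapply neq_C_C; [eassumption | eassumption | frame_index_neq]
     | match goal with H : is_true (e x ?z) |- _ => apply: (neq_of_nbr H); frame_adj_basic end
     | match goal with H : is_true (e ?z x) |- _ =>
         apply: (neq_of_nbr (adj_sym H)); frame_adj_basic end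
     | match goal with H : is_true (e y ?z) |- _ =>
         rewrite eq_sym; apply: (neq_of_nbr H); frame_adj_basic end
     | match goal with H : is_true (e ?z y) |- _ =>
         rewrite eq_sym; apply: (neq_of_nbr (adj_sym H)); frame_adj_basic end ]
  end.

Ltac frame_clique := fail.
Ltac frame_adj := first [frame_adj_basic | frame_clique].
Ltac frame_auto := first [frame_adj | frame_neq].

Lemma B_nonempty i : exists b, b \in B i.
Proof. exact/set0Pn. Qed.

Lemma C_nonempty i : exists c, c \in C i.
Proof. exact/set0Pn. Qed.

Lemma B_A_nbr i b : b \in B i -> exists2 a, a \in A & e a b.
Proof.
by move=> Bb; have [/existsP[a /andP[Aa ba]] _] := (B_C_nbrs i).1 b Bb; exists a; rewrite // e_sym.
Qed.

Lemma B_C_nbr i b : b \in B i -> exists2 c, c \in C i & e b c.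
Proof. by move=> Bb; have [_ /existsP[c /andP[Cc bc]]] := (B_C_nbrs i).1 b Bb; exists c. Qed.

Lemma C_B_nbr i c : c \in C i -> exists2 b, b \in B i & e b c.
Proof.
by move=> Cc; have /existsP[b /andP[Bb cb]] := (B_C_nbrs i).2 c Cc; exists b; rewrite // e_sym.
Qed.

Lemma A_nbrs_two_parts a : a \in A ->
  exists p q x y, [/\ p != q, x \in B p, y \in B q, e a x & e a y].
Proof.
move=> Aa; have [p [q [pq /existsP[x /andP[Bx ax]] /existsP[y /andP[By ay]]]]] := A_two_parts Aa.
by exists p, q, x, y.
Qed.

Lemma A_nbr_other_part a i : a \in A -> exists m x, [/\ m != i, x \in B m & e a x].
Proof.
move=> Aa; have [p [q [x [y [pq Bx By ax ay]]]]] := A_nbrs_two_parts Aa.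
have [pi | pi] := eqVneq p i; last by exists p, x.
by exists q, y; rewrite -pi eq_sym.
Qed.

Lemma A_nbr_in_parts_or_none a (P : pred 'I_t) :
  (exists k b, [/\ P k, b \in B k & e a b]) \/ (forall k b, P k -> b \in B k -> ~~ e a b).
Proof.
have [/existsP[k /existsP[b /and3P[Bb Pk ab]]] | none] :=
  boolP [exists k, [exists b in B k, P k && e a b]]; first by left; exists k, b.
right=> k b Pk Bb; apply: contra none => ab.
by apply/existsP; exists k; apply/existsP; exists b; rewrite Bb Pk ab.
Qed.

(** ** The parts are cliques *)

Lemma A_nbr_transfer i b1 b2 c a : b1 \in B i -> b2 \in B i -> c \in C i ->
  e b1 b2 -> e b2 c -> ~~ e b1 c -> a \in A -> e a b1 -> e a b2.
Proof.
move=> Bb1 Bb2 Cc b1b2 b2c b1c Aa ab1; apply/negPn/negP => ab2.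
have [m [bm [mi Bbm abm]]] := A_nbr_other_part i Aa; have [cm Ccm bmcm] := B_C_nbr Bbm.
by apply: (no_induced_C6 a b1 b2 c cm bm); frame_auto.
Qed.

Section CCliqueAdjacentCase.
Variables (i : 'I_t) (b1 b2 c1 c2 : T).
Hypotheses (Bb1 : b1 \in B i) (Bb2 : b2 \in B i) (Cc1 : c1 \in C i) (Cc2 : c2 \in C i).
Hypotheses (b1b2 : e b1 b2) (b1c1 : e b1 c1) (b2c2 : e b2 c2).
Hypotheses (b1c2 : ~~ e b1 c2) (b2c1 : ~~ e b2 c1) (c1c2 : ~~ e c1 c2).

Lemma same_A_nbrs a : a \in A -> e a b1 = e a b2.
Proof.
move=> Aa; apply/idP/idP; first exact: A_nbr_transfer Bb1 Bb2 Cc2 b1b2 b2c2 b1c2 Aa.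
exact: A_nbr_transfer Bb2 Bb1 Cc1 (adj_sym b1b2) b1c1 b2c1 Aa.
Qed.

Lemma no_A_nbrs_in_two_other_parts a j k bj bk :
  a \in A -> e a b1 -> bj \in B j -> bk \in B k -> e a bj -> e a bk ->
  j != i -> k != i -> j != k -> False.
Proof.
move=> Aa ab1 Bbj Bbk abj abk ji ki jk; have ab2 : e a b2 by rewrite -same_A_nbrs.
have [cj Ccj bjcj] := B_C_nbr Bbj; have [ck Cck bkck] := B_C_nbr Bbk.
by apply: (no_induced_T0 cj ck bj bk c1 c2 a b1 b2); frame_auto.
Qed.

Lemma C_clique_adjacent_case : False.
Proof.
have [a Aa ab1] := B_A_nbr Bb1; have ab2 : e a b2 by rewrite -same_A_nbrs.
have [j [bj [ji Bbj abj]]] := A_nbr_other_part i Aa; have [cj Ccj bjcj] := B_C_nbr Bbj.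
have [k ki kj] := third_index i j; have [bk Bbk] := B_nonempty k.
have [ak Aak akbk] := B_A_nbr Bbk; have [ck Cck bkck] := B_C_nbr Bbk.
have abk : ~~ e a bk.
  by apply/negP => abk; apply: (no_A_nbrs_in_two_other_parts Aa ab1 Bbj Bbk abj abk); frame_auto.
have [akb1 | akb1] := boolP (e ak b1).
  have akbj : ~~ e ak bj.
    by apply/negP => akbj;
      apply: (no_A_nbrs_in_two_other_parts Aak akb1 Bbk Bbj akbk akbj); frame_auto.
  have [aak | aak] := boolP (e a ak); first by apply: (no_induced_C6 a bj cj ck bk ak); frame_auto.
  by apply: (no_induced_C7 a bj cj ck bk ak b1); frame_auto.
have akb2 : ~~ e ak b2 by rewrite -same_A_nbrs.
have [aak | aak] := boolP (e a ak); first by apply: (no_induced_C6 a b1 c1 ck bk ak); frame_auto.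
have [akbj | akbj] := boolP (e ak bj).
  by apply: (no_induced_C7 a b1 c1 ck bk ak bj); frame_auto.
have [m [z [mk Bz akz]]] := A_nbr_other_part k Aak.
have [az | az] := boolP (e a z); have [mi | mi] := eqVneq m i; try subst m.
- by apply: (no_induced_C7 a bj cj ck bk ak z); frame_auto.
- by apply: (no_induced_C7 a b1 c1 ck bk ak z); frame_auto.
- by apply: (no_induced_2P3 a bj cj z ak bk); frame_auto.
- by apply: (no_induced_2P3 c2 b2 a bk ak z); frame_auto.
Qed.

End CCliqueAdjacentCase.

Lemma C_clique_nonadjacent_case i b1 b2 c1 c2 : b1 \in B i -> b2 \in B i ->
  c1 \in C i -> c2 \in C i -> ~~ e b1 b2 ->
  e b1 c1 -> e b2 c2 -> ~~ e b1 c2 -> ~~ e b2 c1 -> ~~ e c1 c2 -> False.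
Proof.
move=> Bb1 Bb2 Cc1 Cc2 b1b2 b1c1 b2c2 b1c2 b2c1 c1c2.
have [j ji] := other_index i; have [cj Ccj] := C_nonempty j.
have [/existsP[a /and3P[Aa ab1 ab2]] | no_common] := boolP [exists a in A, e a b1 && e a b2].
  by apply: (no_induced_C6 a b1 c1 cj c2 b2); frame_auto.
have [a1 Aa1 a1b1] := B_A_nbr Bb1; have [a2 Aa2 a2b2] := B_A_nbr Bb2.
have a1b2 : ~~ e a1 b2.
  by apply: contra no_common => a1b2; apply/existsP; exists a1; rewrite Aa1 a1b1 a1b2.
have a2b1 : ~~ e a2 b1.
  by apply: contra no_common => a2b1; apply/existsP; exists a2; rewrite Aa2 a2b1 a2b2.
have [a1a2 | a1a2] := boolP (e a1 a2).
  by apply: (no_induced_C7 a1 b1 c1 cj c2 b2 a2); frame_auto.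
by apply: (no_induced_2P3 a1 b1 c1 a2 b2 c2); frame_auto.
Qed.

Lemma C_clique i : clique e (C i).
Proof.
move=> c1 c2 Cc1 Cc2 c12; apply/negPn/negP => c1c2.
have [j ji] := other_index i; have [cj Ccj] := C_nonempty j.
have no_common b : b \in B i -> e b c1 -> e b c2 -> False.
  by move=> Bb bc1 bc2; apply: (no_induced_C4 b c1 cj c2); frame_auto.
have [b1 Bb1 b1c1] := C_B_nbr Cc1; have [b2 Bb2 b2c2] := C_B_nbr Cc2.
have b1c2 : ~~ e b1 c2 by apply/negP; apply: no_common Bb1 b1c1.
have b2c1 : ~~ e b2 c1 by apply/negP => b2c1; apply: no_common Bb2 b2c1 b2c2.
have [b1b2 | b1b2] := boolP (e b1 b2).
  by apply: (@C_clique_adjacent_case i b1 b2 c1 c2).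
by apply: (@C_clique_nonadjacent_case i b1 b2 c1 c2).
Qed.

Ltac frame_clique ::= eapply C_clique; [eassumption | eassumption | frame_neq].

Lemma A_nbr_exchange a a' i j p q : a \in A -> a' \in A -> p \in B i -> q \in B j -> i != j ->
  e a a' -> e a p -> e a' q -> ~~ e a q -> e a' p.
Proof.
move=> Aa Aa' Bp Bq ij aa' ap a'q aq; apply/negPn/negP => a'p.
have [cp Ccp pcp] := B_C_nbr Bp; have [cq Ccq qcq] := B_C_nbr Bq.
by apply: (no_induced_C6 a p cp cq q a'); frame_auto.
Qed.

Lemma B_C_edge_system i b c : b \in B i -> c \in C i -> e b c ->
  exists pb pc : 'I_t -> T,
    [/\ pb i = b, pc i = c, forall k, pb k \in B k, forall k, pc k \in C k &
        forall k, e (pb k) (pc k)].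
Proof.
move=> Bb Cc bc; pose pb k := if k == i then b else xchoose (B_nonempty k).
have Bpb k : pb k \in B k.
  by rewrite /pb; case: eqVneq => [-> // | _]; exact: (xchooseP (B_nonempty k)).
have pc_ex k : exists c, (c \in C k) && e (pb k) c.
  by have [c' Cc' bc'] := B_C_nbr (Bpb k); exists c'; rewrite Cc' bc'.
pose pc k := if k == i then c else xchoose (pc_ex k).
have Cpc k : (pc k \in C k) && e (pb k) (pc k).
  by rewrite /pc; case: eqVneq => [-> | _]; [rewrite /pb eqxx Cc | exact: (xchooseP (pc_ex k))].
exists pb, pc; split=> [||k|k|k] //; try by rewrite /pb /pc eqxx.
  by case/andP: (Cpc k).
by case/andP: (Cpc k).
Qed.

Lemma no_pentagon_in_frame a i b1 b2 c1 c2 : a \in A -> b1 \in B i -> b2 \in B i ->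
  c1 \in C i -> c2 \in C i -> e a b1 -> e a b2 -> ~~ e b1 b2 ->
  e b1 c1 -> e b2 c2 -> ~~ e b1 c2 -> ~~ e b2 c1 ->
  (forall k b, k != i -> b \in B k -> e a b) -> False.
Proof.
move=> Aa Bb1 Bb2 Cc1 Cc2 ab1 ab2 b1b2 b1c1 b2c2 b1c2 b2c1 a_other.
have [pb [pc [pbi pci Bpb Cpc pbpc]]] := B_C_edge_system Bb1 Cc1 b1c1.
have c1c2 : e c1 c2 by frame_auto.
(* Index [ord_max] of the (t+1)-pentagon carries the extra pair b2, c2. *)
pose fb x := if unlift ord_max x is Some k then pb k else b2.
pose fc x := if unlift ord_max x is Some k then pc k else c2.
apply: (@no_induced_pentagon t.+1 a fb fc free_pentagon).
  by rewrite ltnS (leq_trans _ t_ge3).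
- move=> x; case: (unliftP ord_max x) => [k -> | ->]; rewrite /fb ?liftK ?unlift_none //.
  by have [-> | ki] := eqVneq k i; [rewrite pbi | exact: a_other ki (Bpb k)].
- move=> x; case: (unliftP ord_max x) => [k -> | ->]; rewrite /fc ?liftK ?unlift_none //.
  by have Ck := Cpc k; frame_auto.
  by frame_auto.
- move=> x y; case: (unliftP ord_max x) => [k -> | ->]; case: (unliftP ord_max y) => [l -> | ->];
    rewrite /fb ?liftK ?unlift_none ?eqxx ?(inj_eq (@lift_inj _ ord_max)) //.
  + by move=> kl; have Bk := Bpb k; have Bl := Bpb l; frame_auto.
  + by move=> _; have [-> | ki] := eqVneq k i; [rewrite pbi | have Bk := Bpb k; frame_auto].
  + by move=> _; have [-> | li] := eqVneq l i; [rewrite pbi e_sym | have Bl := Bpb l; frame_auto].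
- move=> x y; case: (unliftP ord_max x) => [k -> | ->]; case: (unliftP ord_max y) => [l -> | ->];
    rewrite /fc ?liftK ?unlift_none ?eqxx ?(inj_eq (@lift_inj _ ord_max)) //.
  + by move=> kl; have Ck := Cpc k; have Cl := Cpc l; frame_auto.
  + by move=> _; have [-> | ki] := eqVneq k i; [rewrite pci | have Ck := Cpc k; frame_auto].
  + by move=> _; have [-> | li] := eqVneq l i; [rewrite pci e_sym | have Cl := Cpc l; frame_auto].
- move=> x y; case: (unliftP ord_max x) => [k -> | ->]; case: (unliftP ord_max y) => [l -> | ->];
    rewrite /fb /fc ?liftK ?unlift_none ?eqxx ?(inj_eq (@lift_inj _ ord_max)) ?pbpc //.
  + have [-> | kl] := eqVneq k l; first exact: pbpc.
    by have Bk := Bpb k; have Cl := Cpc l; apply/negbTE; frame_auto.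
  + rewrite eq_sym (negbTE (neq_lift _ _)); apply/negbTE.
    by have [-> | ki] := eqVneq k i; [rewrite pbi | have Bk := Bpb k; frame_auto].
  + rewrite (negbTE (neq_lift _ _)); apply/negbTE.
    by have [-> | li] := eqVneq l i; [rewrite pci | have Cl := Cpc l; frame_auto].
Qed.

Lemma B_clique_common_A_nbr i b1 b2 a : b1 \in B i -> b2 \in B i -> b1 != b2 ->
  ~~ e b1 b2 -> a \in A -> e a b1 -> e a b2 -> False.
Proof.
move=> Bb1 Bb2 b12 b1b2 Aa ab1 ab2.
have [c1 Cc1 b1c1] := B_C_nbr Bb1; have [c2 Cc2 b2c2] := B_C_nbr Bb2.
have no_common c : c \in C i -> e b1 c -> e b2 c -> False.
  by move=> Cc b1c b2c; apply: (no_induced_C4 a b1 c b2); frame_auto.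
have b1c2 : ~~ e b1 c2 by apply/negP => b1c2; apply: no_common Cc2 b1c2 b2c2.
have b2c1 : ~~ e b2 c1 by apply/negP; apply: no_common Cc1 b1c1.
have [/existsP[k /existsP[bk /and3P[Bbk ki abk]]] | a_other] :=
  boolP [exists k, [exists b in B k, (k != i) && ~~ e a b]].
  have [j ji jk] := third_index i k; have [cj Ccj] := C_nonempty j.
  have [ck Cck bkck] := B_C_nbr Bbk.
  by apply: (no_induced_2P3 b1 a b2 cj ck bk); frame_auto.
apply: (no_pentagon_in_frame Aa Bb1 Bb2 Cc1 Cc2 ab1 ab2 b1b2 b1c1 b2c2 b1c2 b2c1) => k b ki Bb.
apply: contraNT a_other => ab; apply/existsP; exists k; apply/existsP; exists b.
by rewrite Bb ki ab.
Qed.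

Lemma far_A_vertex_contra i j k a b c x ak bk : a \in A -> ak \in A ->
  b \in B i -> c \in C i -> x \in B j -> bk \in B k -> j != i -> k != i -> k != j ->
  e a b -> e b c -> e a x -> e ak bk -> ~~ e a bk -> ~~ e ak a -> ~~ e ak b -> False.
Proof.
move=> Aa Aak Bb Cc Bx Bbk ji ki kj ab bc ax akbk abk aka akb.
have [ck Cck bkck] := B_C_nbr Bbk.
have [akx | akx] := boolP (e ak x); first by apply: (no_induced_C7 a b c ck bk ak x); frame_auto.
by apply: (no_induced_2P3 x a b ck bk ak); frame_auto.
Qed.

Section BCliquePrivateANbrs.
Variables (i : 'I_t) (b1 b2 a1 a2 : T).
Hypotheses (Bb1 : b1 \in B i) (Bb2 : b2 \in B i) (b1b2 : ~~ e b1 b2).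
Hypotheses (Aa1 : a1 \in A) (Aa2 : a2 \in A) (a1b1 : e a1 b1) (a2b2 : e a2 b2).
Hypothesis no_common_A_nbr : forall a, a \in A -> e a b1 -> ~~ e a b2.

Let a1b2 : ~~ e a1 b2. Proof. exact: no_common_A_nbr. Qed.
Let a2b1 : ~~ e a2 b1.
Proof. by apply: contraL a2b2; apply: no_common_A_nbr. Qed.

Lemma B_clique_common_C_nbr_adj c : c \in C i -> e b1 c -> e b2 c -> e a1 a2 -> False.
Proof.
move=> Cc b1c b2c a1a2.
have [j [x [ji Bx a1x]]] := A_nbr_other_part i Aa1.
have a2x : e a2 x := A_nbr_exchange Aa1 Aa2 Bx Bb2 ji a1a2 a1x a2b2 a1b2.
have [cx Ccx xcx] := B_C_nbr Bx.
case: (A_nbr_in_parts_or_none a1 [pred k | (k != i) && (k != j)]) =>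
    [[k [y [/andP[ki kj] By a1y]]] | a1_none].
  have a2y : e a2 y := A_nbr_exchange Aa1 Aa2 By Bb2 ki a1a2 a1y a2b2 a1b2.
  have [cy Ccy ycy] := B_C_nbr By.
  by apply: (no_induced_T0 a1 a2 b1 b2 x y c cx cy); frame_auto.
have [k ki kj] := third_index i j; have [bk Bbk] := B_nonempty k.
have [ak Aak akbk] := B_A_nbr Bbk.
have a1bk : ~~ e a1 bk by apply: a1_none Bbk; rewrite /= ki kj.
have a2bk : ~~ e a2 bk.
  apply: contra a1bk => a2bk.
  by apply: (A_nbr_exchange Aa2 Aa1 Bbk Bb1 _ (adj_sym a1a2) a2bk a1b1 a2b1).
have ak_sees a b : a \in A -> b \in B i -> e a b -> ~~ e a bk -> e ak a -> e ak b.
  move=> Aa Bb ab abk aka.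
  by apply: (A_nbr_exchange Aa Aak Bb Bbk _ (adj_sym aka) ab akbk abk); frame_auto.
have [akb1 | akb1] := boolP (e ak b1).
  have akb2 := no_common_A_nbr Aak akb1.
  have aka2 : ~~ e ak a2 by apply: contra akb2; apply: ak_sees Aa2 Bb2 a2b2 a2bk.
  exact: (far_A_vertex_contra Aa2 Aak Bb2 Cc Bx Bbk ji ki kj a2b2 b2c a2x akbk a2bk aka2 akb2).
have aka1 : ~~ e ak a1 by apply: contra akb1; apply: ak_sees Aa1 Bb1 a1b1 a1bk.
exact: (far_A_vertex_contra Aa1 Aak Bb1 Cc Bx Bbk ji ki kj a1b1 b1c a1x akbk a1bk aka1 akb1).
Qed.

Lemma B_clique_common_C_nbr_nonadj c : c \in C i -> e b1 c -> e b2 c -> ~~ e a1 a2 -> False.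
Proof.
move=> Cc b1c b2c a1a2.
have [j [x [ji Bx a1x]]] := A_nbr_other_part i Aa1.
have [m [y [mi By a2y]]] := A_nbr_other_part i Aa2.
have [a2x | a2x] := boolP (e a2 x); first by apply: (no_induced_C6 a1 b1 c b2 a2 x); frame_auto.
have [a1y | a1y] := boolP (e a1 y); first by apply: (no_induced_C6 a2 b2 c b1 a1 y); frame_auto.
have [xy | xy] := boolP (e x y); first by apply: (no_induced_C7 a1 x y a2 b2 c b1); frame_auto.
by apply: (no_induced_2P3 x a1 b1 b2 a2 y); frame_auto.
Qed.

Lemma B_clique_no_common_C_nbr c1 c2 : c1 \in C i -> c2 \in C i ->
  e b1 c1 -> e b2 c2 -> ~~ e b1 c2 -> ~~ e b2 c1 -> False.
Proof.
move=> Cc1 Cc2 b1c1 b2c2 b1c2 b2c1.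
have [a1a2 | a1a2] := boolP (e a1 a2).
  by apply: (no_induced_C6 b1 a1 a2 b2 c2 c1); frame_auto.
have [j [x [ji Bx a1x]]] := A_nbr_other_part i Aa1.
have [a2x | a2x] := boolP (e a2 x).
  by apply: (no_induced_C7 a1 b1 c1 c2 b2 a2 x); frame_auto.
by apply: (no_induced_2P3 x a1 b1 a2 b2 c2); frame_auto.
Qed.

End BCliquePrivateANbrs.

Lemma B_clique i : clique e (B i).
Proof.
move=> b1 b2 Bb1 Bb2 b12; apply/negPn/negP => b1b2.
have [/existsP[a /and3P[Aa ab1 ab2]] | no_common] := boolP [exists a in A, e a b1 && e a b2].
  exact: (B_clique_common_A_nbr Bb1 Bb2 b12 b1b2 Aa ab1 ab2).
have no_common_A_nbr a : a \in A -> e a b1 -> ~~ e a b2.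
  by move=> Aa ab1; apply: contra no_common => ab2; apply/existsP; exists a; rewrite Aa ab1 ab2.
have [a1 Aa1 a1b1] := B_A_nbr Bb1; have [a2 Aa2 a2b2] := B_A_nbr Bb2.
have [c1 Cc1 b1c1] := B_C_nbr Bb1; have [c2 Cc2 b2c2] := B_C_nbr Bb2.
have [/existsP[c /and3P[Cc b1c b2c]] | no_common_C] := boolP [exists c in C i, e b1 c && e b2 c].
  have [a1a2 | a1a2] := boolP (e a1 a2).
    exact: (B_clique_common_C_nbr_adj Bb1 Bb2 b1b2 Aa1 Aa2 a1b1 a2b2 no_common_A_nbr Cc).
  exact: (B_clique_common_C_nbr_nonadj Bb1 Bb2 b1b2 Aa1 Aa2 a1b1 a2b2 no_common_A_nbr Cc).
have b1c2 : ~~ e b1 c2.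
  by apply: contra no_common_C => b1c2; apply/existsP; exists c2; rewrite Cc2 b1c2 b2c2.
have b2c1 : ~~ e b2 c1.
  by apply: contra no_common_C => b2c1; apply/existsP; exists c1; rewrite Cc1 b1c1 b2c1.
exact: (B_clique_no_common_C_nbr Bb1 Bb2 b1b2 Aa1 Aa2 a1b1 a2b2 no_common_A_nbr Cc1 Cc2).
Qed.

Ltac frame_clique ::= first
  [ eapply C_clique; [eassumption | eassumption | frame_neq]
  | eapply B_clique; [eassumption | eassumption | frame_neq] ].

Lemma A_complete_other_parts_of_split a j x y : a \in A -> x \in B j -> y \in B j ->
  e a x -> ~~ e a y -> forall k b, k != j -> b \in B k -> e a b.
Proof.
move=> Aa Bx By ax ay k b kj Bb; apply/negPn/negP => ab.
have [m mj mk] := third_index j k; have [cm Ccm] := C_nonempty m.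
have [ck Cck bck] := B_C_nbr Bb.
by apply: (no_induced_2P3 a x y cm ck b); frame_auto.
Qed.

Lemma A_common_nbr_private a a' i b j x : a \in A -> a' \in A -> a != a' -> ~~ e a a' ->
  b \in B i -> e a b -> e a' b -> x \in B j -> j != i -> e a x -> ~~ e a' x.
Proof.
move=> Aa Aa' aa' a_a' Bb ab a'b Bx ji ax; apply/negP => a'x.
by apply: (no_induced_C4 a b a' x); frame_auto.
Qed.

Section ACliqueCases.
Variables (a1 a2 : T).
Hypotheses (Aa1 : a1 \in A) (Aa2 : a2 \in A) (a12 : a1 != a2) (a1a2 : ~~ e a1 a2).

Lemma A_clique_common_B_nbr_three_parts i b j x m y : b \in B i -> e a1 b -> e a2 b ->
  x \in B j -> e a1 x -> y \in B m -> e a2 y -> j != i -> m != i -> j != m -> False.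
Proof.
move=> Bb a1b a2b Bx a1x By a2y ji mi jm.
have a2x := A_common_nbr_private Aa1 Aa2 a12 a1a2 Bb a1b a2b Bx ji a1x.
have a1y : ~~ e a1 y.
  by apply: (A_common_nbr_private Aa2 Aa1 _ _ Bb a2b a1b By mi a2y); frame_auto.
have [cx Ccx xcx] := B_C_nbr Bx; have [cy Ccy ycy] := B_C_nbr By.
by apply: (no_induced_C7 a1 x cx cy y a2 b); frame_auto.
Qed.

Lemma A_clique_common_B_nbr i b : b \in B i -> e a1 b -> e a2 b -> False.
Proof.
move=> Bb a1b a2b.
have [j [x [ji Bx a1x]]] := A_nbr_other_part i Aa1.
have [m [y [mi By a2y]]] := A_nbr_other_part i Aa2.
have [jm | jm] := eqVneq j m; last first.
  exact: A_clique_common_B_nbr_three_parts Bb a1b a2b Bx a1x By a2y ji mi jm.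
subst m; have a1y : ~~ e a1 y.
  by apply: (A_common_nbr_private Aa2 Aa1 _ _ Bb a2b a1b By mi a2y); frame_auto.
have [k ki kj] := third_index i j; have [bk Bbk] := B_nonempty k.
have a1bk := A_complete_other_parts_of_split Aa1 Bx By a1x a1y kj Bbk.
exact: A_clique_common_B_nbr_three_parts Bb a1b a2b Bbk a1bk By a2y ki ji kj.
Qed.

Lemma A_clique_no_common_B_nbr : (forall i b, b \in B i -> e a1 b -> ~~ e a2 b) -> False.
Proof.
move=> no_common.
have no_common' i b : b \in B i -> e a2 b -> ~~ e a1 b.
  by move=> Bb a2b; apply: contraL a2b; apply: no_common Bb.
have same_part i x y : x \in B i -> y \in B i -> e a1 x -> e a2 y -> False.
  move=> Bx By a1x a2y; have [m [z [mi Bz a2z]]] := A_nbr_other_part i Aa2.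
  have := A_complete_other_parts_of_split Aa1 Bx By a1x (no_common' _ _ By a2y) mi Bz.
  by apply/negP; apply: no_common' Bz a2z.
have [p [q [x1 [x2 [pq Bx1 Bx2 a1x1 a1x2]]]]] := A_nbrs_two_parts Aa1.
have [r [s [y1 [y2 [rs By1 By2 a2y1 a2y2]]]]] := A_nbrs_two_parts Aa2.
have pr : p != r by apply/eqP => pr; subst r; exact: same_part Bx1 By1 a1x1 a2y1.
have ps : p != s by apply/eqP => ps; subst s; exact: same_part Bx1 By2 a1x1 a2y2.
have qr : q != r by apply/eqP => qr; subst r; exact: same_part Bx2 By1 a1x2 a2y1.
have qs : q != s by apply/eqP => qs; subst s; exact: same_part Bx2 By2 a1x2 a2y2.
have a2x1 := no_common _ _ Bx1 a1x1; have a2x2 := no_common _ _ Bx2 a1x2.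
have a1y1 := no_common' _ _ By1 a2y1; have a1y2 := no_common' _ _ By2 a2y2.
by apply: (no_induced_2P3 x1 a1 x2 y1 a2 y2); frame_auto.
Qed.

End ACliqueCases.

Lemma A_clique : clique e A.
Proof.
move=> a1 a2 Aa1 Aa2 a12; apply/negPn/negP => a1a2.
have [/existsP[i /existsP[b /and3P[Bb a1b a2b]]] | no_common] :=
  boolP [exists i, [exists b in B i, e a1 b && e a2 b]].
  exact: (A_clique_common_B_nbr Aa1 Aa2 a12 a1a2 Bb a1b a2b).
apply: (A_clique_no_common_B_nbr Aa1 Aa2 a1a2) => i b Bb a1b.
apply: contra no_common => a2b; apply/existsP; exists i; apply/existsP; exists b.
by rewrite Bb a1b a2b.
Qed.

Ltac frame_clique ::= first
  [ eapply C_clique; [eassumption | eassumption | frame_neq]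
  | eapply B_clique; [eassumption | eassumption | frame_neq]
  | eapply A_clique; [eassumption | eassumption | frame_neq] ].

(** ** Non-edges between A and B *)

Lemma A_nonnbr_three_other_parts a i x j y k b m : a \in A -> x \in B i -> y \in B j ->
  b \in B k -> i != j -> k != i -> k != j -> m != i -> m != j -> m != k ->
  e a x -> e a y -> ~~ e a b -> False.
Proof.
move=> Aa Bx By Bb ij ki kj mi mj mk ax ay ab.
have [cm Ccm] := C_nonempty m; have [ck Cck bck] := B_C_nbr Bb.
by apply: (no_induced_2P3 x a y cm ck b); frame_auto.
Qed.

Lemma A_complete_B_of_gt3 a k b : 3 < t -> a \in A -> b \in B k -> e a b.
Proof.
move=> t_gt3 Aa Bb; apply/negPn/negP => ab.
have [i [x [ik Bx ax]]] := A_nbr_other_part k Aa.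
have [j ji jk] := third_index i k.
case: (A_nbr_in_parts_or_none a [pred l | (l != i) && (l != k)]) =>
    [[l [y [/andP[li lk] By ay]]] | a_none].
  have [m [mi ml mk]] := fourth_index i l k t_gt3.
  by apply: (A_nonnbr_three_other_parts (m := m) Aa Bx By Bb); frame_auto.
have [z Bz az] : exists2 z, z \in B k & e a z.
  have [p [q [x1 [x2 [pq Bx1 Bx2 ax1 ax2]]]]] := A_nbrs_two_parts Aa.
  have in_k l z : z \in B l -> e a z -> l != i -> l = k.
    move=> Bz az li; apply/eqP; apply: contraTT az => lk.
    by apply: a_none Bz; rewrite /= li.
  have [pi | pi] := eqVneq p i.
    by exists x2 => //; rewrite -(in_k q x2 Bx2 ax2) // -pi eq_sym.
  by exists x1 => //; rewrite -(in_k p x1 Bx1 ax1 pi).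
have [bj Bbj] := B_nonempty j.
have abj : ~~ e a bj by apply: a_none Bbj; rewrite /= ji jk.
have [m [mi mk mj]] := fourth_index i k j t_gt3.
by apply: (A_nonnbr_three_other_parts (m := m) Aa Bx Bz Bbj); frame_auto.
Qed.

Lemma A_complete_other_parts a k b : a \in A -> b \in B k -> ~~ e a b ->
  forall j z, j != k -> z \in B j -> e a z.
Proof.
move=> Aa Bb ab j z jk Bz; apply/negPn/negP => az.
have not_in_k w : w \in B k -> ~~ e a w.
  move=> Bw; apply/negP => aw; move: az.
  by rewrite (A_complete_other_parts_of_split Aa Bw Bb aw ab jk Bz).
have not_in_j w : w \in B j -> ~~ e a w.
  move=> Bw; apply/negP => aw; move: ab.
  by rewrite (A_complete_other_parts_of_split Aa Bw Bz aw az _ Bb) // eq_sym.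
have [p [q [x [y [pq Bx By ax ay]]]]] := A_nbrs_two_parts Aa.
have [pk | pk] := eqVneq p k; first by subst; move: ax; rewrite (negbTE (not_in_k _ Bx)).
have [pj | pj] := eqVneq p j; first by subst; move: ax; rewrite (negbTE (not_in_j _ Bx)).
have [qk | qk] := eqVneq q k; first by subst; move: ay; rewrite (negbTE (not_in_k _ By)).
have [qj | qj] := eqVneq q j; first by subst; move: ay; rewrite (negbTE (not_in_j _ By)).
have t_gt3 := four_indices_gt3 pq pj pk qj qk jk.
by move: ab; rewrite (A_complete_B_of_gt3 t_gt3 Aa Bb).
Qed.

Lemma A_B_nonadj_part_unique a0 i0 b0 a k b : a0 \in A -> b0 \in B i0 -> ~~ e a0 b0 ->
  a \in A -> b \in B k -> ~~ e a b -> k = i0.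
Proof.
move=> Aa0 Bb0 a0b0 Aa Bb ab; apply/eqP; apply: contraT => ki0.
have i0k : i0 != k by rewrite eq_sym.
have ab0 := A_complete_other_parts Aa Bb ab i0k Bb0.
have a0b := A_complete_other_parts Aa0 Bb0 a0b0 ki0 Bb.
have aa0 : e a a0 by frame_auto.
by move: a0b0; rewrite (A_nbr_exchange Aa Aa0 Bb0 Bb i0k aa0 ab0 a0b ab).
Qed.

Lemma A_complete_B_off_part a0 i0 b0 a k b : a0 \in A -> b0 \in B i0 -> ~~ e a0 b0 ->
  a \in A -> b \in B k -> k != i0 -> e a b.
Proof.
move=> Aa0 Bb0 a0b0 Aa Bb ki0; apply/negPn/negP => ab.
by move: ki0; rewrite (A_B_nonadj_part_unique Aa0 Bb0 a0b0 Aa Bb ab) eqxx.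
Qed.

Lemma B_C_complete_of_A_B_nonadj a0 i0 b0 m b c : a0 \in A -> b0 \in B i0 -> ~~ e a0 b0 ->
  b \in B m -> c \in C m -> e b c.
Proof.
move=> Aa0 Bb0 a0b0 Bb Cc; apply/negPn/negP => bc.
have a0_off k x : k != i0 -> x \in B k -> e a0 x.
  by move=> ki0 Bx; apply: (A_complete_B_off_part Aa0 Bb0 a0b0 Aa0 Bx ki0).
have [c0 Cc0 b0c0] := B_C_nbr Bb0.
have [mi0 | mi0] := eqVneq m i0; last first.
  have [k ki0 km] := third_index i0 m; have [bk Bbk] := B_nonempty k.
  have a0b := a0_off _ _ mi0 Bb; have a0bk := a0_off _ _ ki0 Bbk.
  by apply: (no_induced_2P3 b a0 bk b0 c0 c); frame_auto.
subst m; have [j ji0] := other_index i0; have [k ki0 kj] := third_index i0 j.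
have [bj Bbj] := B_nonempty j; have [bk Bbk] := B_nonempty k.
have a0bj := a0_off _ _ ji0 Bbj; have a0bk := a0_off _ _ ki0 Bbk.
have [a0b | a0b] := boolP (e a0 b).
  have [b0c | b0c] := boolP (e b0 c).
    have [cj Ccj bjcj] := B_C_nbr Bbj.
    by apply: (no_induced_C6 a0 b b0 c cj bj); frame_auto.
  by apply: (no_induced_2P3 bj a0 bk b0 c0 c); frame_auto.
have [c' Cc' bc'] := B_C_nbr Bb.
by apply: (no_induced_2P3 bj a0 bk b c' c); frame_auto.
Qed.

(** ** Nested neighbourhoods *)

Lemma mem_Bunion i b : b \in B i -> b \in Bunion B.
Proof. by move=> Bb; apply/bigcupP; exists i. Qed.

Lemma A_nbhd_comparable a a' : a \in A -> a' \in A ->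
  nbhd e a :&: Bunion B \subset nbhd e a' :&: Bunion B \/
  nbhd e a' :&: Bunion B \subset nbhd e a :&: Bunion B.
Proof.
move=> Aa Aa'; apply: nbhd_comparable => p q /bigcupP[i _ Bp] /bigcupP[j _ Bq] ap a'p a'q aq.
have [ij | ij] := eqVneq i j; first by subst j; apply: (no_induced_C4 a p q a'); frame_auto.
have aa' : e a a' by frame_auto.
by move: a'p; rewrite (A_nbr_exchange Aa Aa' Bp Bq ij aa' ap a'q aq).
Qed.

Lemma B_nbhd_comparable i b b' : b \in B i -> b' \in B i ->
  nbhd e b :&: C i \subset nbhd e b' :&: C i \/ nbhd e b' :&: C i \subset nbhd e b :&: C i.
Proof.
move=> Bb Bb'; apply: nbhd_comparable => p q Cp Cq bp b'p b'q bq.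
by apply: (no_induced_C4 b p q b'); frame_auto.
Qed.

Lemma C_nbhd_comparable i c c' : c \in C i -> c' \in C i ->
  nbhd e c :&: B i \subset nbhd e c' :&: B i \/ nbhd e c' :&: B i \subset nbhd e c :&: B i.
Proof.
move=> Cc Cc'; apply: nbhd_comparable => p q Bp Bq cp c'p c'q cq.
by apply: (no_induced_C4 c p q c'); frame_auto.
Qed.

Lemma nbhd_A_outside a : a \in A -> nbhd e a :\: Bunion B = A :\ a.
Proof.
move=> Aa; apply/setP => v; rewrite !inE; apply/andP/andP => [[notB av] | [va Av]].
  split; first by rewrite eq_sym; exact: adj_neq av.
  have [// | [i Bv] | [i Cv]] := frame_cover v; first by rewrite (mem_Bunion Bv) in notB.
  by rewrite (negbTE (A_C_nonadj Aa Cv)) in av.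
split; last by frame_auto.
by apply/bigcupP => -[i _ Bv]; apply: A_B_disjoint Av Bv.
Qed.

Lemma nbhd_C_outside i c : c \in C i -> nbhd e c :\: B i = (\bigcup_(j < t) C j) :\ c.
Proof.
move=> Cc; apply/setP => v; rewrite !inE; apply/andP/andP => [[notB cv] | [vc /bigcupP[j _ Cv]]].
  split; first by rewrite eq_sym; exact: adj_neq cv.
  have [Av | [j Bv] | [j Cv]] := frame_cover v; last by apply/bigcupP; exists j.
    by rewrite e_sym (negbTE (A_C_nonadj Av Cc)) in cv.
  have [ji | ji] := eqVneq j i; first by subst j; rewrite Bv in notB.
  by rewrite e_sym (negbTE (B_C_nonadj Bv Cc ji)) in cv.
split; first by apply/negP => Bv; apply: B_C_disjoint Bv Cv.
by have [ji | ji] := eqVneq j i; [subst j | ]; frame_auto.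
Qed.

Lemma nbhd_B_outside i b : complete e A (Bunion B) -> b \in B i ->
  nbhd e b :\: C i = (A :|: B i) :\ b.
Proof.
move=> AB Bb; apply/setP => v; rewrite !inE.
apply/andP/andP => [[notC bv] | [vb /orP[Av | Bv]]].
  split; first by rewrite eq_sym; exact: adj_neq bv.
  have [-> // | [j Bv] | [j Cv]] := frame_cover v.
    have [ji | ji] := eqVneq j i; first by subst j; rewrite Bv orbT.
    by rewrite e_sym (negbTE (B_B_nonadj Bv Bb ji)) in bv.
  have [ji | ji] := eqVneq j i; first by subst j; rewrite Cv in notC.
  by rewrite eq_sym in ji; rewrite (negbTE (B_C_nonadj Bb Cv ji)) in bv.
  split; first by apply/negP => Cv; apply: A_C_disjoint Av Cv.
  by rewrite e_sym; apply: AB (mem_Bunion Bb).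
split; first by apply/negP => Cv; apply: B_C_disjoint Bv Cv.
by frame_auto.
Qed.

Lemma A_nested_nbhd sA : enumerates sA A -> deg_nonincr e sA -> nested_nbhd e sA (Bunion B).
Proof.
move=> enum_sA deg_sA; apply: (nested_nbhd_of_comparable (K := #|A| - 1) enum_sA deg_sA).
  exact: A_nbhd_comparable.
by move=> a Aa; rewrite nbhd_A_outside // card_setD1.
Qed.

Lemma C_nested_nbhd i sC : enumerates sC (C i) -> deg_nonincr e sC -> nested_nbhd e sC (B i).
Proof.
move=> enum_sC deg_sC.
apply: (nested_nbhd_of_comparable (K := #|\bigcup_(j < t) C j| - 1) enum_sC deg_sC).
  exact: C_nbhd_comparable.
by move=> c Cc; rewrite nbhd_C_outside // card_setD1 //; apply/bigcupP; exists i.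
Qed.

Lemma B_nested_nbhd i sB : enumerates sB (B i) -> deg_nonincr e sB -> nested_nbhd e sB (C i).
Proof.
move=> enum_sB deg_sB; case: (completeP A (Bunion B)) => [AB | nAB].
  apply: (nested_nbhd_of_comparable (K := #|A :|: B i| - 1) enum_sB deg_sB).
    exact: B_nbhd_comparable.
  by move=> b Bb; rewrite nbhd_B_outside // card_setD1 // inE Bb orbT.
have [a0 [b0 [Aa0 /bigcupP[i0 _ Bb0] a0b0]]] := not_complete_nonadj nAB.
apply: (nested_nbhd_of_complete enum_sB) => b c Bb Cc.
exact: (B_C_complete_of_A_B_nonadj Aa0 Bb0 a0b0 Bb Cc).
Qed.

Lemma A_first_full sA : enumerates sA A -> deg_nonincr e sA -> first_full e sA (Bunion B).
Proof.
move=> enum_sA deg_sA; apply: (first_full_of_nested enum_sA (A_nested_nbhd enum_sA deg_sA)).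
by move=> b /bigcupP[i _ Bb]; apply: B_A_nbr Bb.
Qed.

Lemma B_first_full i sB : enumerates sB (B i) -> deg_nonincr e sB -> first_full e sB (C i).
Proof.
move=> enum_sB deg_sB; apply: (first_full_of_nested enum_sB (B_nested_nbhd enum_sB deg_sB)).
exact: C_B_nbr.
Qed.

Lemma C_first_full i sC : enumerates sC (C i) -> deg_nonincr e sC -> first_full e sC (B i).
Proof.
move=> enum_sC deg_sC; apply: (first_full_of_nested enum_sC (C_nested_nbhd enum_sC deg_sC)).
by move=> b Bb; have [c Cc bc] := B_C_nbr Bb; exists c; rewrite // e_sym.
Qed.

Lemma B_C_nested i sB sC : enumerates sB (B i) -> deg_nonincr e sB ->
  enumerates sC (C i) -> deg_nonincr e sC ->
  [/\ nested_nbhd e sB (C i), first_full e sB (C i) &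
      forall x0, 0 < size sB -> nth x0 sC 0 \in nbhd e (last_elt x0 sB) :&: C i] /\
  [/\ nested_nbhd e sC (B i), first_full e sC (B i) &
      forall x0, 0 < size sC -> nth x0 sB 0 \in nbhd e (last_elt x0 sC) :&: B i].
Proof.
move=> enum_sB deg_sB enum_sC deg_sC.
have full_sB := B_first_full enum_sB deg_sB; have full_sC := C_first_full enum_sC deg_sC.
have [[b Bb] [c Cc]] := (B_nonempty i, C_nonempty i).
have [sB_gt0 sC_gt0] := (enumerates_size_gt0 enum_sB Bb, enumerates_size_gt0 enum_sC Cc).
split; split; try done; try exact: B_nested_nbhd; try exact: C_nested_nbhd;
  move=> x0 s_gt0; rewrite !inE e_sym.
  by rewrite (first_full_nbr _ full_sC) ?(mem_enumerates_last, mem_enumerates_first).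
by rewrite (first_full_nbr _ full_sB) ?(mem_enumerates_last, mem_enumerates_first).
Qed.

Lemma t_eq3_of_A_B_nonadj a0 i0 b0 : a0 \in A -> b0 \in B i0 -> ~~ e a0 b0 -> t = 3.
Proof.
move=> Aa0 Bb0 a0b0; apply/eqP; rewrite eqn_leq t_ge3 andbT leqNgt; apply/negP => t_gt3.
by move: a0b0; rewrite (A_complete_B_of_gt3 t_gt3 Aa0 Bb0).
Qed.

Lemma A_complete_Bunion_off_part a0 i0 b0 : a0 \in A -> b0 \in B i0 -> ~~ e a0 b0 ->
  complete e A (Bunion B :\: B i0).
Proof.
move=> Aa0 Bb0 a0b0 a b Aa; rewrite inE => /andP[notBi0 /bigcupP[k _ Bb]].
by apply: (A_complete_B_off_part Aa0 Bb0 a0b0 Aa Bb); apply: contraNneq notBi0 => <-.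
Qed.

Lemma villa_of_complete sB : (forall i, enumerates (sB i) (B i) /\ deg_nonincr e (sB i)) ->
  complete e A (Bunion B) -> villa_partition e A B C.
Proof.
move=> sB_ok AB; repeat split=> //; try exact: A_clique; try exact: B_clique; try exact: C_clique.
move=> i; have [enum_sB deg_sB] := sB_ok i; exists (sB i); split=> //.
- exact: B_nested_nbhd.
- exact: B_first_full.
move=> x0 sB_gt0; have [c Cc bc] := B_C_nbr (mem_enumerates_last x0 enum_sB sB_gt0).
by apply/set0Pn; exists c; rewrite !inE bc.
Qed.

Lemma basket_of_A_B_nonadj sA a0 i0 b0 : enumerates sA A -> deg_nonincr e sA ->
  a0 \in A -> b0 \in B i0 -> ~~ e a0 b0 -> basket_partition e A B C set0.
Proof.
move=> enum_sA deg_sA Aa0 Bb0 a0b0; repeat split=> //.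
- exact: (t_eq3_of_A_B_nonadj Aa0 Bb0 a0b0).
- by move=> x; rewrite -cats1 count_cat parts /= in_set0.
- exact: A_clique.
- exact: B_clique.
- exact: C_clique.
- by move=> x y; rewrite in_set0.
- exists i0; split; first exact: (A_complete_Bunion_off_part Aa0 Bb0 a0b0).
  have Bi0_sub : B i0 \subset Bunion B by apply/subsetP => b; apply: mem_Bunion.
  exists sA; split=> //.
    exact: (nested_nbhd_subset Bi0_sub (A_nested_nbhd enum_sA deg_sA)).
  exact: (first_full_subset Bi0_sub (A_first_full enum_sA deg_sA)).
- by move=> i b c Bb Cc; apply: (B_C_complete_of_A_B_nonadj Aa0 Bb0 a0b0 Bb Cc).
- by exists i0; split=> x y; rewrite in_set0.
Qed.

Lemma frame_structure sA sB sC : enumerates sA A -> deg_nonincr e sA ->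
  (forall i, enumerates (sB i) (B i) /\ deg_nonincr e (sB i)) ->
  (forall i, enumerates (sC i) (C i) /\ deg_nonincr e (sC i)) ->
  [/\ clique e A /\ (forall i, clique e (B i)) /\ (forall i, clique e (C i)),
      complete e A (Bunion B) \/
      [/\ t = 3,
          exists istar, [/\ nested_nbhd e sA (Bunion B),
                            first_full e sA (Bunion B) &
                            forall x0, 0 < size sA ->
                              Bunion B :\: B istar \subset
                              nbhd e (last_elt x0 sA) :&: Bunion B] &
          forall i, complete e (B i) (C i)],
      (forall i,
         [/\ nested_nbhd e (sB i) (C i), first_full e (sB i) (C i) &
             (forall x0, 0 < size (sB i) ->
                nth x0 (sC i) 0 \in nbhd e (last_elt x0 (sB i)) :&: C i)] /\
         [/\ nested_nbhd e (sC i) (B i), first_full e (sC i) (B i) &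
             (forall x0, 0 < size (sC i) ->
                nth x0 (sB i) 0 \in nbhd e (last_elt x0 (sC i)) :&: B i)]),
      (complete e A (Bunion B) -> villa_partition e A B C) &
      (~ complete e A (Bunion B) -> t = 3 /\ basket_partition e A B C set0)].
Proof.
move=> enum_sA deg_sA sB_ok sC_ok; split.
- by split; [exact: A_clique | split; [exact: B_clique | exact: C_clique]].
- case: (completeP A (Bunion B)) => [AB | ]; first by left.
  move/not_complete_nonadj => [a0 [b0 [Aa0 /bigcupP[i0 _ Bb0] a0b0]]].
  right; split; first exact: (t_eq3_of_A_B_nonadj Aa0 Bb0 a0b0).
    exists i0; split; [exact: A_nested_nbhd | exact: A_first_full | move=> x0 sA_gt0].
    apply/subsetP => b Bb; have /setDP[BUb _] := Bb; rewrite !inE BUb andbT.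
    exact: (A_complete_Bunion_off_part Aa0 Bb0 a0b0 (mem_enumerates_last x0 enum_sA sA_gt0) Bb).
  by move=> i b c Bb Cc; apply: (B_C_complete_of_A_B_nonadj Aa0 Bb0 a0b0 Bb Cc).
- by move=> i; have [[? ?] [? ?]] := (sB_ok i, sC_ok i); apply: B_C_nested.
- exact: villa_of_complete.
move/not_complete_nonadj => [a0 [b0 [Aa0 /bigcupP[i0 _ Bb0] a0b0]]].
split; first exact: (t_eq3_of_A_B_nonadj Aa0 Bb0 a0b0).
exact: (basket_of_A_B_nonadj enum_sA deg_sA Aa0 Bb0 a0b0).
Qed.

End Frame.
End Graph.

Theorem lemma5p5 (T : finType) (e : rel T) (t : nat)
  (A : {set T}) (B C : 'I_t -> {set T})
  (sA : seq T) (sB sC : 'I_t -> seq T) :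
  simple_graph e ->
  3 <= t ->
  H_free e twoP3 -> H_free e (@cycle_rel 4) -> H_free e (@cycle_rel 6) ->
  H_free e (@cycle_rel 7) -> H_free e T0_rel -> H_free e (@pentagon_rel t.+1) ->
  frame_partition e A B C ->
  enumerates sA A -> deg_nonincr e sA ->
  (forall i, enumerates (sB i) (B i) /\ deg_nonincr e (sB i)) ->
  (forall i, enumerates (sC i) (C i) /\ deg_nonincr e (sC i)) ->
  [/\ (* (a) *)
      clique e A /\ (forall i, clique e (B i)) /\ (forall i, clique e (C i)),
      (* (b) *)
      complete e A (Bunion B) \/
      [/\ t = 3,
          exists istar, [/\ nested_nbhd e sA (Bunion B),
                            first_full e sA (Bunion B) &
                            forall x0, 0 < size sA ->
                              Bunion B :\: B istar \subset
                              nbhd e (last_elt x0 sA) :&: Bunion B] &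
          forall i, complete e (B i) (C i)],
      (* (c) *)
      (forall i,
         [/\ nested_nbhd e (sB i) (C i), first_full e (sB i) (C i) &
             (forall x0, 0 < size (sB i) ->
                nth x0 (sC i) 0 \in nbhd e (last_elt x0 (sB i)) :&: C i)] /\
         [/\ nested_nbhd e (sC i) (B i), first_full e (sC i) (B i) &
             (forall x0, 0 < size (sC i) ->
                nth x0 (sB i) 0 \in nbhd e (last_elt x0 (sC i)) :&: B i)]),
      (* (d) *)
      (complete e A (Bunion B) -> villa_partition e A B C) &
      (* (e) *)
      (~ complete e A (Bunion B) -> t = 3 /\ basket_partition e A B C set0)].
Proof.
move=> [e_sym e_irr] t_ge3 free_2P3 free_C4 free_C6 free_C7 free_T0 free_pentagon
  [_ [parts [A_neq0 [B_neq0 [C_neq0 [A_two_parts [A_C_anti [B_B_anti [C_C_complete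
  [B_C_anti B_C_nbrs]]]]]]]]]].
by apply: frame_structure.
Qed.
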